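(* Let $\mathfrak B_r^-$ and $\mathfrak B_r^+$ be the branches of the discrete Neumann correspondence $\mathfrak B_r$ (with the same $\lambda_*$ and the same choice of $A^{1/2}(\lambda_* )$) corresponding to opposite partitions $\mathbf w_-=\{w_1,\dots,w_r\mid-w_1,\dots,-w_r\}$ and $\mathbf w_+=\{-w_1,\dots,-w_r\mid w_1,\dots,w_r\}$ of the eigenvalues of $L(\lambda_* )$. Then for every initial point $(X,P)\in T^*V_{n,r}$, $$\mathfrak B_r^-\circ\mathfrak B_r^+(X,P)=(-X,-P).$$
   Context: $A=\mathrm{diag}(a_1,\dots,a_n)$, $A(\lambda)=\lambda\mathbf I_n-A$, $\lambda_*\ne a_i$, $A^{1/2}(\lambda_* )$ a fixed diagonal square root. $T^*V_{n,r}=\{(X,P): X^TX=\mathbf I_r,\ X^TP+P^TX=0\}$. $L(\lambda)=\begin{pmatrix} X^TA(\lambda)^{-1}P & X^TA(\lambda)^{-1}X\\ \mathbf I_r-P^TA(\lambda)^{-1}P & -P^TA(\lambda)^{-1}X\end{pmatrix}$; its eigenvalues at $\lambda_*$ come in pairs $\pm w$, and its spectrum is preserved by the map. A partition $\{w_1,\dots,w_r\mid-w_1,\dots,-w_r\}$ chooses $r$ eigenvalues $w_1,\dots,w_r$ of $L(\lambda_* )$, distinct with $w_i\ne-w_j$; with $\begin{pmatrix}\Xi\\ \Upsilon\end{pmatrix}$ the matrix of corresponding eigenvectors, $\Gamma=\Upsilon\Xi^{-1}$ is a symmetric solution of $\Gamma\mathbf U\Gamma+\Gamma\mathbf V+\mathbf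 V^T\Gamma-\mathbf W=0$ ($\mathbf U=X^TA^{-1}(\lambda_* )X$, $\mathbf V=X^TA^{-1}(\lambda_* )P$, $\mathbf W=\mathbf I_r-P^TA^{-1}(\lambda_* )P$), and the branch of $\mathfrak B_r$ for this partition is $\tilde X=A^{-1/2}(\lambda_* )(P+X\Gamma)$, $\tilde P=-A^{1/2}(\lambda_* )X+\tilde X\Gamma$. The partition is applied at each step to the eigenvalues of the current Lax matrix at $\lambda_*$. *)

From HB Require Import structures.
From mathcomp Require Import all_boot all_order all_algebra.
Set Implicit Arguments. Unset Strict Implicit. Unset Printing Implicit Defensive.
Import Order.TTheory GRing.Theory Num.Theory.
Local Open Scope ring_scope.

Section Neumann.
Variables (C : numClosedFieldType) (n r : nat).

Definition Amat (a : 'I_n -> C) (lam : C) : 'M[C]_n :=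
  diag_mx (\row_i (lam - a i)).

Definition Ainv (a : 'I_n -> C) (lam : C) : 'M[C]_n := invmx (Amat a lam).

Definition Lax (a : 'I_n -> C) (lam : C) (X P : 'M[C]_(n, r)) : 'M[C]_(r + r) :=
  block_mx (X^T *m Ainv a lam *m P) (X^T *m Ainv a lam *m X)
           (1%:M - P^T *m Ainv a lam *m P) (- (P^T *m Ainv a lam *m X)).

Definition in_TV (X P : 'M[C]_(n, r)) : Prop :=
  X^T *m X = 1%:M /\ X^T *m P + P^T *m X = 0.

(* [Xi; Ups] is a matrix of eigenvectors of L for the eigenvalues w_1..w_r,
   with Xi invertible (so that Gamma = Ups Xi^{-1} is defined). *)
Definition eigvec_mat (L : 'M[C]_(r + r)) (w : 'rV[C]_r) (Xi Ups : 'M[C]_r) : Prop :=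
  L *m col_mx Xi Ups = col_mx Xi Ups *m diag_mx w /\ Xi \in unitmx.

(* One step of the branch of B_r: given the diagonal square root
   A^{1/2}(lambda_star) = diag_mx d and Gamma = Ups Xi^{-1},
   Xt = A^{-1/2}(P + X Gamma), Pt = -A^{1/2} X + Xt Gamma. *)
Definition Bstep (d : 'rV[C]_n) (Xi Ups : 'M[C]_r) (X P : 'M[C]_(n, r))
  : 'M[C]_(n, r) * 'M[C]_(n, r) :=
  let Gam := Ups *m invmx Xi in
  let Xt := invmx (diag_mx d) *m (P + X *m Gam) in
  (Xt, - (diag_mx d *m X) + Xt *m Gam).

End Neumann.

From HB Require Import structures.
From mathcomp Require Import all_boot all_order all_algebra.
Import Order.TTheory GRing.Theory Num.Theory.
Local Open Scope ring_scope.
Set Implicit Arguments. Unset Strict Implicit.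

(* L(lambda) is Hamiltonian, so eigenvectors for eigenvalues w_i with
   w_i + w_j <> 0 span a Lagrangian subspace: Gamma is symmetric, and such an
   eigenspace is the graph of a unique symmetric matrix.  A direct computation
   shows that after the step with Gamma, the graph of -Gamma is the eigenspace
   of the new Lax matrix for the opposite eigenvalues.  So the opposite branch
   steps with -Gamma, which undoes the step with Gamma up to the sign of
   (X, P). *)

Section Hamiltonian.
Variables (R : comPzRingType) (r : nat).

Definition symp_mx : 'M[R]_(r + r) := block_mx 0 1%:M (- 1%:M) 0.

Definition hamiltonian (L : 'M[R]_(r + r)) : Prop :=
  L^T *m symp_mx = - (symp_mx *m L).

Lemma symp_form_col (A1 B1 A2 B2 : 'M[R]_r) :
  (col_mx A1 B1)^T *m symp_mx *m col_mx A2 B2 = A1^T *m B2 - B1^T *m A2.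
Proof.
rewrite /symp_mx tr_col_mx mul_row_block mul_row_col.
by rewrite !mulmx0 !mulmx1 !mulmxN !mulmx1 add0r addr0 !mulNmx addrC.
Qed.

Lemma hamiltonian_block (V U W : 'M[R]_r) :
  U^T = U -> W^T = W -> hamiltonian (block_mx V U W (- V^T)).
Proof.
move=> U_sym W_sym; rewrite /hamiltonian /symp_mx tr_block_mx !mulmx_block.
rewrite opp_block_mx U_sym W_sym !mulmx0 !mul0mx !mulmx1 !mul1mx !mulNmx.
by rewrite !mulmxN !add0r !addr0 ?mulmx1 ?mul1mx linearN /= trmxK !opprK.
Qed.

Lemma hamiltonian_eigvec_sylvester (L : 'M[R]_(r + r)) (D K : 'M[R]_r)
    (M N : 'M[R]_(r + r, r)) :
  hamiltonian L -> D^T = D -> L *m M = M *m D -> L *m N = N *m K ->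
  D *m (M^T *m symp_mx *m N) + (M^T *m symp_mx *m N) *m K = 0.
Proof.
move=> hamL D_sym LM LN.
have -> : D *m (M^T *m symp_mx *m N) = (L *m M)^T *m symp_mx *m N.
  by rewrite LM trmx_mul D_sym !mulmxA.
rewrite trmx_mul -[M^T *m L^T *m _]mulmxA hamL mulmxN mulNmx.
by rewrite -!mulmxA LN !mulmxA addNr.
Qed.

End Hamiltonian.

Lemma sylvester_diag_eq0 (R : idomainType) (r : nat) (w : 'rV[R]_r)
    (Z : 'M[R]_r) :
  (forall i j, w 0 i + w 0 j != 0) ->
  diag_mx w *m Z + Z *m diag_mx w = 0 -> Z = 0.
Proof.
move=> w_sum eqZ; apply/matrixP => i j.
have /eqP := congr1 (fun M : 'M_r => M i j) eqZ.
rewrite mul_diag_mx mul_mx_diag !mxE [w 0 i * _]mulrC -mulrDr mulf_eq0.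
by rewrite (negbTE (w_sum i j)) orbF => /eqP.
Qed.

Section LagrangianEigenspaces.
Variables (F : fieldType) (r : nat) (L : 'M[F]_(r + r)) (w : 'rV[F]_r).
Hypothesis hamL : hamiltonian L.
Hypothesis w_sum_neq0 : forall i j, w 0 i + w 0 j != 0.

Lemma eigvec_isotropic (M N : 'M[F]_(r + r, r)) :
  L *m M = M *m diag_mx w -> L *m N = N *m diag_mx w ->
  M^T *m symp_mx F r *m N = 0.
Proof.
move=> LM LN; apply: sylvester_diag_eq0 w_sum_neq0 _.
exact: hamiltonian_eigvec_sylvester hamL (tr_diag_mx w) LM LN.
Qed.

Lemma eigvec_graph_sym (Xi Ups : 'M[F]_r) :
  L *m col_mx Xi Ups = col_mx Xi Ups *m diag_mx w -> Xi \in unitmx ->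
  (Ups *m invmx Xi)^T = Ups *m invmx Xi.
Proof.
move=> LXU Xi_unit.
have /eqP := eigvec_isotropic LXU LXU.
rewrite symp_form_col subr_eq0 => /eqP XtU.
rewrite trmx_mul trmx_inv -[Ups^T](mulmxK Xi_unit) -XtU.
by rewrite mulmxA mulKmx ?unitmx_tr.
Qed.

Lemma eigvec_graph_unique (T G Xi Ups : 'M[F]_r) :
  G^T = G -> T \in unitmx ->
  L *m col_mx T (G *m T) = col_mx T (G *m T) *m diag_mx w ->
  L *m col_mx Xi Ups = col_mx Xi Ups *m diag_mx w -> Xi \in unitmx ->
  Ups *m invmx Xi = G.
Proof.
move=> G_sym T_unit LT LXU Xi_unit.
have := eigvec_isotropic LXU LT.
rewrite symp_form_col mulmxA -mulmxBl => /(congr1 (mulmx^~ (invmx T))).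
rewrite mulmxK // mul0mx => /eqP; rewrite subr_eq0 => /eqP /(congr1 trmx).
rewrite trmx_mul G_sym !trmxK => <-.
by rewrite mulmxK.
Qed.

End LagrangianEigenspaces.

Definition branch_step (C : numClosedFieldType) (n r : nat) (d : 'rV[C]_n)
    (G : 'M[C]_r) (X P : 'M[C]_(n, r)) : 'M[C]_(n, r) * 'M[C]_(n, r) :=
  let Y := invmx (diag_mx d) *m (P + X *m G) in
  (Y, - (diag_mx d *m X) + Y *m G).

Lemma Bstep_branch_step (C : numClosedFieldType) (n r : nat) (d : 'rV[C]_n)
    (Xi Ups : 'M[C]_r) (X P : 'M[C]_(n, r)) :
  Bstep d Xi Ups X P = branch_step d (Ups *m invmx Xi) X P.
Proof. by []. Qed.

Lemma branch_step_oppK (C : numClosedFieldType) (n r : nat) (d : 'rV[C]_n)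
    (X P : 'M[C]_(n, r)) (G : 'M[C]_r) :
  diag_mx d \in unitmx ->
  branch_step d (- G) (branch_step d G X P).1 (branch_step d G X P).2
  = (- X, - P).
Proof.
move=> S_unit; rewrite /branch_step /= mulmxN addrK mulmxN mulKmx //.
by rewrite mulKVmx // mulNmx mulmxN opprK opprD addrNK.
Qed.

Section NeumannStep.
Variables (C : numClosedFieldType) (n r : nat) (a : 'I_n -> C) (lam : C).

Lemma Ainv_tr : (Ainv a lam)^T = Ainv a lam.
Proof. by rewrite /Ainv trmx_inv /Amat tr_diag_mx. Qed.

Lemma Lax_hamiltonian (X P : 'M[C]_(n, r)) : hamiltonian (Lax a lam X P).
Proof.
rewrite /Lax.
have -> : P^T *m Ainv a lam *m X = (X^T *m Ainv a lam *m P)^T.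
  by rewrite !trmx_mul trmxK Ainv_tr mulmxA.
apply: hamiltonian_block; first by rewrite !trmx_mul trmxK Ainv_tr mulmxA.
by rewrite linearB /= trmx1 !trmx_mul trmxK Ainv_tr mulmxA.
Qed.

Variable d : 'rV[C]_n.
Hypothesis d_sq : forall i, d 0 i ^+ 2 = lam - a i.
Hypothesis lam_neq_a : forall i, lam != a i.

Local Notation S := (diag_mx d).
Local Notation B := (Ainv a lam).

Lemma sqrt_unitmx : S \in unitmx.
Proof.
rewrite unitmxE det_diag unitfE; apply/prodf_neq0 => i _.
apply: contra (lam_neq_a i) => /eqP di0.
by move: (d_sq i); rewrite di0 expr0n /= => /eqP; rewrite eq_sym subr_eq0.
Qed.

Lemma Ainv_sqrt : B = invmx S *m invmx S.
Proof.
have SS_unit : S *m S \in unitmx by rewrite unitmx_mul sqrt_unitmx.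
rewrite /Ainv; have -> : Amat a lam = S *m S.
  rewrite mulmx_diag; congr diag_mx; apply/rowP => i.
  by rewrite !mxE -d_sq expr2.
rewrite -[RHS]mul1mx -(mulVmx SS_unit) -!mulmxA.
by rewrite [S *m (invmx S *m _)]mulmxA mulmxV ?sqrt_unitmx // mul1mx
  mulmxV ?sqrt_unitmx // mulmx1.
Qed.

Lemma sqrt_Ainv_sqrt : S *m B *m S = 1%:M.
Proof.
by rewrite Ainv_sqrt !mulmxA mulmxV ?sqrt_unitmx // mul1mx mulVmx ?sqrt_unitmx.
Qed.

Lemma invsqrt_Ainv_sqrt : invmx S *m B *m S = B.
Proof. by rewrite Ainv_sqrt -!mulmxA mulVmx ?sqrt_unitmx // mulmx1. Qed.

(* [K] is the top row block of L(lambda_star) at the starting point applied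
   to the graph of [G]; it acts on [Xi] by the chosen eigenvalues. *)
Lemma Lax_branch_step_graph (X P : 'M[C]_(n, r)) (G : 'M[C]_r) :
  X^T *m X = 1%:M -> G^T = G ->
  let K := X^T *m B *m P + X^T *m B *m X *m G in
  let Y := (branch_step d G X P).1 in let Q := (branch_step d G X P).2 in
  Lax a lam Y Q *m col_mx 1%:M (- G) = col_mx (- K^T) (G *m K^T).
Proof.
move=> XtX G_sym K Y Q.
have QGY : Q - Y *m G = - (S *m X) by rewrite addrK.
have YBSX : Y^T *m B *m (S *m X) = K^T.
  have -> : Y^T *m B *m (S *m X) = (P + X *m G)^T *m (invmx S *m B *m S) *m X.
    by rewrite /Y /= trmx_mul trmx_inv tr_diag_mx !mulmxA.
  rewrite invsqrt_Ainv_sqrt /K !linearD /= !trmx_mul !trmxK Ainv_tr.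
  by rewrite !mulmxDl !mulmxA.
have QBSX : Q^T *m B *m (S *m X) = - 1%:M + G *m K^T.
  have -> : Q^T *m B *m (S *m X)
           = - (X^T *m (S *m B *m S) *m X) + G *m (Y^T *m B *m (S *m X)).
    rewrite linearD /= linearN /= (trmx_mul S X) (trmx_mul Y G) tr_diag_mx.
    by rewrite G_sym !mulmxDl !mulNmx !mulmxA.
  by rewrite sqrt_Ainv_sqrt mulmx1 XtX YBSX.
rewrite /Lax mul_block_col !mulmx1 !mulmxN mulNmx opprK; congr col_mx.
  by rewrite -[_ *m B *m Y *m G]mulmxA -mulmxBr QGY mulmxN YBSX.
rewrite -addrA [- _ + _]addrC -[_ *m B *m Y *m G]mulmxA -opprB.
by rewrite -mulmxBr QGY mulmxN opprK QBSX addrA subrr add0r.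
Qed.

Lemma Lax_Bstep_eigvec (X P : 'M[C]_(n, r)) (v : 'rV[C]_r) (Xi Ups : 'M[C]_r) :
  X^T *m X = 1%:M -> eigvec_mat (Lax a lam X P) v Xi Ups ->
  (Ups *m invmx Xi)^T = Ups *m invmx Xi ->
  let T := invmx Xi^T in let G := Ups *m invmx Xi in
  eigvec_mat (Lax a lam (Bstep d Xi Ups X P).1 (Bstep d Xi Ups X P).2)
    (- v) T (- G *m T).
Proof.
move=> XtX [LXU Xi_unit] G_sym T G.
have T_unit : T \in unitmx by rewrite unitmx_inv unitmx_tr.
set K := X^T *m B *m P + X^T *m B *m X *m G.
have KXi : K *m Xi = Xi *m diag_mx v.
  move: LXU; rewrite /Lax mul_block_col mul_col_mx => /eq_col_mx [<- _].
  by rewrite /K mulmxDl -mulmxA /G -[_ *m _ *m Xi]mulmxA mulmxKV.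
have KtT : K^T *m T = T *m diag_mx v.
  have XitKt : Xi^T *m K^T = diag_mx v *m Xi^T.
    by rewrite -trmx_mul KXi trmx_mul tr_diag_mx.
  have Xit_unit : Xi^T \in unitmx by rewrite unitmx_tr.
  by rewrite -[LHS](mulKmx Xit_unit) [Xi^T *m _]mulmxA XitKt mulmxK.
have diagN : diag_mx (- v) = - diag_mx v.
  by apply/matrixP => i j; rewrite !mxE mulNrn.
split=> //; rewrite Bstep_branch_step.
have -> : col_mx T (- G *m T) = col_mx 1%:M (- G) *m T.
  by rewrite mul_col_mx mul1mx.
rewrite mulmxA Lax_branch_step_graph // -/G -/K !mul_col_mx mulNmx -mulmxA KtT.
by rewrite diagN mul1mx !mulmxN !mulNmx opprK mulmxA.
Qed.

End NeumannStep.

Theorem theorem6p4 (C : numClosedFieldType) (n r : nat)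
  (a : 'I_n -> C) (lam : C) (d : 'rV[C]_n)
  (X P : 'M[C]_(n, r)) (w : 'rV[C]_r)
  (Xi1 Ups1 Xi2 Ups2 : 'M[C]_r) :
  (forall i, a i \is Num.real) ->
  (forall i, lam != a i) ->
  (forall i, d 0 i ^+ 2 = lam - a i) ->
  (forall i j, X i j \is Num.real) ->
  (forall i j, P i j \is Num.real) ->
  in_TV X P ->
  char_poly (Lax a lam X P) = \prod_(i < r) ('X^2 - (w 0 i ^+ 2)%:P) ->
  (forall i j, i != j -> w 0 i != w 0 j) ->
  (forall i j, w 0 i + w 0 j != 0) ->
  eigvec_mat (Lax a lam X P) (- w) Xi1 Ups1 ->
  eigvec_mat (Lax a lam (Bstep d Xi1 Ups1 X P).1 (Bstep d Xi1 Ups1 X P).2) w Xi2 Ups2 ->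
  Bstep d Xi2 Ups2 (Bstep d Xi1 Ups1 X P).1 (Bstep d Xi1 Ups1 X P).2 = (- X, - P).
Proof.
move=> _ lam_neq_a d_sq _ _ [XtX _] _ _ w_sum E1 [LXU2 Xi2_unit].
have negw_sum : forall i j, (- w) 0 i + (- w) 0 j != 0.
  by move=> i j; rewrite !mxE -opprD oppr_eq0.
have G_sym := eigvec_graph_sym (Lax_hamiltonian _ _ _ _) negw_sum E1.1 E1.2.
have [LT T_unit] := Lax_Bstep_eigvec d_sq lam_neq_a XtX E1 G_sym.
rewrite opprK in LT.
have negG_sym : (- (Ups1 *m invmx Xi1))^T = - (Ups1 *m invmx Xi1).
  by rewrite linearN /= G_sym.
have G2 := eigvec_graph_unique (Lax_hamiltonian _ _ _ _) w_sum negG_sym T_unit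
  LT LXU2 Xi2_unit.
by rewrite !Bstep_branch_step G2 branch_step_oppK // (sqrt_unitmx d_sq).
Qed.
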